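(* Let $G$ be a tree on $n$ vertices. Then $G\in\mathcal{G}^{\rm SSP}$ if and only if $G$ contains no vertex of degree at least four and does not contain two vertices of degree three.
   Context: All graphs are finite, simple, undirected. For a graph $G$ on $\{1,\ldots,n\}$, $\mathcal{S}(G)$ is the set of real symmetric $n\times n$ matrices $A=(a_{ij})$ with $a_{ij}\neq0$ iff $\{i,j\}\in E(G)$ for $i\neq j$ (diagonal arbitrary). A real symmetric $A$ has the strong spectral property (SSP) if the only real symmetric $X$ with $A\circ X=0$, $I\circ X=0$, $AX-XA=0$ is $X=0$ ($\circ$ = entrywise product). $\mathcal{G}^{\rm SSP}$ is the set of graphs $G$ such that every matrix in $\mathcal{S}(G)$ has the SSP. *)

From HB Require Import structures.
From mathcomp Require Import all_boot all_order all_algebra.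
From mathcomp Require Import reals.
Set Implicit Arguments. Unset Strict Implicit. Unset Printing Implicit Defensive.
Import Order.TTheory GRing.Theory Num.Theory.
Local Open Scope ring_scope.

Definition simple_graph (n : nat) (e : rel 'I_n) : Prop :=
  symmetric e /\ irreflexive e.

Definition graph_connected (n : nat) (e : rel 'I_n) : Prop :=
  forall x y : 'I_n, connect e x y.

Definition graph_acyclic (n : nat) (e : rel 'I_n) : Prop :=
  forall c : seq 'I_n, ucycle e c -> (size c < 3)%N.

Definition is_tree (n : nat) (e : rel 'I_n) : Prop :=
  simple_graph e /\ graph_connected e /\ graph_acyclic e.

Definition degree (n : nat) (e : rel 'I_n) (v : 'I_n) : nat :=
  #|[set w | e v w]|.

Definition in_SG (R : realType) (n : nat) (e : rel 'I_n) (A : 'M[R]_n) : Prop :=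
  A^T = A /\ (forall i j : 'I_n, i != j -> (A i j != 0) = e i j).

Definition hadamard (R : realType) (n : nat) (A B : 'M[R]_n) : 'M[R]_n :=
  \matrix_(i, j) (A i j * B i j).

Definition SSP (R : realType) (n : nat) (A : 'M[R]_n) : Prop :=
  forall X : 'M[R]_n, X^T = X ->
    hadamard A X = 0 -> hadamard 1%:M X = 0 -> A *m X - X *m A = 0 ->
    X = 0.

Definition in_GSSP (R : realType) (n : nat) (e : rel 'I_n) : Prop :=
  forall A : 'M[R]_n, in_SG e A -> SSP A.

From mathcomp Require Import all_boot all_order all_algebra.
From mathcomp Require Import reals.
From mathcomp Require Import zify ring.
Set Implicit Arguments. Unset Strict Implicit. Unset Printing Implicit Defensive.
Import Order.TTheory GRing.Theory Num.Theory.

(* Necessity: a vertex of degree at least four, or two vertices of degree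
   three, form a set P such that G - P has four components C1, C2, D1, D2
   where every p in P has as many neighbours in C1 as in C2, and in D1 as in
   D2.  For the matrix A of [cut_laplacian], x = 1_C1 - 1_C2 and
   y = 1_D1 - 1_D2 are null vectors with disjoint supports and no edge between
   them, so X = x y^T + y x^T is a nonzero witness against the SSP.

   Sufficiency: otherwise the tree is a spider with at most three legs around
   a centre c.  Let X be symmetric, zero on the diagonal and on the edges, and
   commute with A.  Reading A X = X A entrywise, X vanishes between a vertex
   and its ancestors (induction on their distance), and then between vertices
   on different legs (induction on the sum of their depths): rescaled by the
   products of A along the legs, such an entry can be transported until one
   end is adjacent to c, where the rows of c give a linear system whose only
   symmetric solution is zero. *)

Section Components.
Variables (n : nat) (e : rel 'I_n).
Hypotheses (e_sym : symmetric e) (e_irr : irreflexive e).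

Definition edgeD (P : {set 'I_n}) : rel 'I_n :=
  [rel a b | [&& e a b, a \notin P & b \notin P]].

Definition compD (P : {set 'I_n}) (u : 'I_n) : {set 'I_n} :=
  [set w | connect (edgeD P) u w].

Definition nbr_count (P : {set 'I_n}) (u p : 'I_n) : nat :=
  #|[set k in compD P u | e p k]|.

Definition balanced (P : {set 'I_n}) (u u' : 'I_n) : Prop :=
  {in P, forall p, nbr_count P u p = nbr_count P u' p}.

Variable P : {set 'I_n}.

Lemma edgeD_sym : symmetric (edgeD P).
Proof. by move=> a b; rewrite /edgeD /= e_sym; congr (_ && _); apply: andbC. Qed.

Lemma connect_edgeDC u w : connect (edgeD P) u w = connect (edgeD P) w u.
Proof. exact: (sym_connect_sym edgeD_sym). Qed.

Lemma connect_edgeD_notin u w :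
  u \notin P -> connect (edgeD P) u w -> w \notin P.
Proof.
move=> uP /connectP[s + ->]; elim: s u uP => //= y s IH u _.
by case/andP=> /and3P[_ _ yP]; apply: IH.
Qed.

Lemma connect_edgeD_edge u w k : u \notin P ->
  connect (edgeD P) u w -> e w k -> k \notin P -> connect (edgeD P) u k.
Proof.
move=> uP uw ewk kP; have wP := connect_edgeD_notin uP uw.
by apply: connect_trans uw (connect1 _); rewrite /edgeD /= ewk kP wP.
Qed.

Lemma connect_edgeD_subset (Q : {set 'I_n}) u w :
  P \subset Q -> connect (edgeD Q) u w -> connect (edgeD P) u w.
Proof.
move=> PQ; apply: connect_sub => a b /and3P[eab aQ bQ]; apply: connect1.
by rewrite /edgeD /= eab (contra (subsetP PQ a)) // (contra (subsetP PQ b)).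
Qed.

Hypothesis e_acy : graph_acyclic e.

(* A walk avoiding [p] between two neighbours of [p] would close a cycle through [p]. *)
Lemma connect_edgeD_nbrs p u u' : p \in P -> e p u -> e p u' -> u \notin P ->
  connect (edgeD P) u u' -> u = u'.
Proof.
move=> pP epu epu' uP /connectP[s ps u'E]; apply/eqP/negPn/negP => uu'.
move: epu' uu'; rewrite u'E; case: (shortenP ps) => s' ps' us' _ epu' uu'.
have s'0 : s' != [::] by apply: contraNneq uu' => ->.
have pNs' : p \notin u :: s'.
  apply/negP => /(path_connect ps') /(connect_edgeD_notin uP).
  by rewrite pP.
have /e_acy : ucycle e [:: p, u & s'].
  rewrite /ucycle /= rcons_path epu (sub_path _ ps'); last by move=> a b /andP[].
  by rewrite e_sym epu' pNs'.
by case: s' s'0 {ps' us' pNs' epu' uu'}.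
Qed.

Lemma nbr_count_nbr p u : p \in P -> e p u -> u \notin P -> nbr_count P u p = 1%N.
Proof.
move=> pP epu uP; apply/eqP/cards1P; exists u; apply/setP => k.
rewrite !inE; apply/andP/eqP => [[uk epk]|->]; last by rewrite connect0.
by rewrite (connect_edgeD_nbrs pP epu epk).
Qed.

End Components.

Local Open Scope ring_scope.

Lemma sumr_nat_bool (R : nzSemiRingType) (I : finType) (A : {pred I}) (b : I -> bool) :
  \sum_(j in A) (b j)%:R = #|[set j in A | b j]|%:R :> R.
Proof. by rewrite -natr_sum -sum1dep_card -big_mkcondr. Qed.

Lemma big_only2 (V : nmodType) (I : finType) (P : pred I) (F : I -> V) a b :
  a != b -> P a -> P b -> (forall j, j != a -> j != b -> P j -> F j = 0) ->
  \sum_(j | P j) F j = F a + F b.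
Proof.
move=> ab Pa Pb H; rewrite (bigD1 a) //= (bigD1 b) /=; last by rewrite Pb eq_sym.
by rewrite big1 ?addr0 // => j /andP[/andP[Pj ja] jb]; apply: H.
Qed.

Lemma triangle_system_eq0 (F : numFieldType) (a1 a2 a3 x y z : F) :
  a1 != 0 -> a2 != 0 ->
  a1 * x + a3 * z = 0 -> a2 * x + a3 * y = 0 -> a1 * y + a2 * z = 0 -> x = 0.
Proof.
move=> a10 a20 Ex Ey Ez.
have : 2 * a1 * a2 * x = a2 * (a1 * x + a3 * z) + a1 * (a2 * x + a3 * y)
                         - a3 * (a1 * y + a2 * z) by ring.
rewrite Ex Ey Ez !mulr0 addr0 subr0 => /eqP.
by rewrite !mulf_eq0 pnatr_eq0 (negbTE a10) (negbTE a20) /= => /eqP.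
Qed.

Lemma not_SSP_of_null_vectors (R : realType) (n : nat) (A : 'M[R]_n)
    (x y : 'cV[R]_n) (i j : 'I_n) :
  A^T = A -> A *m x = 0 -> A *m y = 0 ->
  (forall k l, (k == l) || (A k l != 0) -> x k 0 * y l 0 = 0) ->
  x i 0 != 0 -> y j 0 != 0 -> ~ SSP A.
Proof.
move=> At Ax Ay xy0 xi0 yj0 ssp.
pose X := x *m y^T + y *m x^T.
have XE k l : X k l = x k 0 * y l 0 + y k 0 * x l 0.
  by rewrite !mxE !big_ord1 !mxE.
have yx0 k l : (k == l) || (A k l != 0) -> y k 0 * x l 0 = 0.
  have Alk : A l k = A k l by rewrite -[in LHS]At mxE.
  by rewrite mulrC eq_sym -Alk; apply: xy0.
have yi0 : y i 0 = 0.
  have := xy0 i i; rewrite eqxx => /(_ isT) /eqP.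
  by rewrite mulf_eq0 (negbTE xi0) => /eqP.
suff /matrixP/(_ i j) : X = 0.
  rewrite XE mxE yi0 mul0r addr0 => /eqP.
  by rewrite mulf_eq0 (negbTE xi0) (negbTE yj0).
apply: ssp.
- by rewrite linearD /= !trmx_mul !trmxK addrC.
- apply/matrixP => k l; rewrite [LHS]mxE [RHS]mxE XE.
  have [->|Akl] := eqVneq (A k l) 0; first by rewrite mul0r.
  by rewrite xy0 ?yx0 ?Akl ?orbT // addr0 mulr0.
- apply/matrixP => k l; rewrite [LHS]mxE [RHS]mxE XE mxE.
  have [<-|kl] := eqVneq k l; last by rewrite mul0r.
  by rewrite xy0 ?yx0 ?eqxx // addr0 mulr0.
- have xA : x^T *m A = 0 by rewrite -At -trmx_mul Ax trmx0.
  have yA : y^T *m A = 0 by rewrite -At -trmx_mul Ay trmx0.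
  by rewrite mulmxDr mulmxDl !mulmxA Ax Ay -!mulmxA xA yA !mul0mx !mulmx0 !addr0 subr0.
Qed.

Section CutLaplacian.
Variables (R : realType) (n : nat) (e : rel 'I_n).
Hypotheses (e_sym : symmetric e) (e_irr : irreflexive e).
Variable P : {set 'I_n}.

(* Minus the Laplacian of G - P, bordered by the edges into P and a zero
   diagonal on P: it maps the indicator of a component C of G - P to the
   vector counting, at each p in P, the neighbours of p in C. *)
Definition cut_laplacian : 'M[R]_n := \matrix_(i, j)
  if i == j then - (if i \in P then 0%N else #|[set k | e i k & k \notin P]|)%:R
  else (e i j)%:R.

Definition indicator (C : {set 'I_n}) : 'cV[R]_n := \col_i (i \in C)%:R.

Lemma cut_laplacian_in_SG : in_SG e cut_laplacian.
Proof.
split; first by apply/matrixP => i j; rewrite !mxE eq_sym e_sym; case: eqP => // ->.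
by move=> i j ij; rewrite mxE (negbTE ij); case: (e i j); rewrite ?oner_eq0 ?eqxx.
Qed.

Lemma cut_laplacian_mul_compD u i : u \notin P ->
  (cut_laplacian *m indicator (compD e P u)) i 0 =
  if i \in P then (nbr_count e P u i)%:R else 0.
Proof.
move=> uP; set C := compD e P u.
have CP j : j \in C -> j \notin P by rewrite inE; apply: connect_edgeD_notin.
rewrite mxE; under eq_bigr do rewrite [X in _ * X]mxE mulr_natr mulrb.
rewrite -big_mkcond /=.
have [iP|iP] := boolP (i \in P).
  rewrite -sumr_nat_bool; apply: eq_bigr => j /CP jP; rewrite mxE.
  by case: eqP => // ij; rewrite -ij iP in jP.
have [iC|iC] := boolP (i \in C); last first.
  apply: big1 => j jC; rewrite mxE; case: eqP => [ij|_]; first by rewrite ij jC in iC.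
  case: (boolP (e i j)) => // eij; move: iC jC; rewrite !inE => /negP iC jC.
  by exfalso; apply: iC; apply: (connect_edgeD_edge uP jC _ iP); rewrite e_sym.
rewrite (bigD1 i) //= mxE eqxx (negbTE iP).
under eq_bigr => j /andP[_ ji] do rewrite mxE eq_sym (negbTE ji).
rewrite sumr_nat_bool; apply/eqP; rewrite addrC subr_eq0; apply/eqP; congr _%:R.
apply: eq_card => k; rewrite !inE.
apply/andP/andP => [[/andP[kC _] eik]|[eik kP]]; first by rewrite eik CP.
split=> //; apply/andP; split; last by apply: contraTneq eik => ->; rewrite e_irr.
by move: iC; rewrite !inE => /connect_edgeD_edge; apply.
Qed.

Lemma cut_laplacian_null u u' : u \notin P -> u' \notin P -> balanced e P u u' ->
  cut_laplacian *m (indicator (compD e P u) - indicator (compD e P u')) = 0.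
Proof.
move=> uP u'P bal; apply/matrixP => i j; rewrite (ord1 j) mulmxBr.
have -> : forall M N : 'cV[R]_n, (M - N) i 0 = M i 0 - N i 0 by move=> M N; rewrite !mxE.
rewrite !cut_laplacian_mul_compD // mxE.
by case: ifP => [/bal ->|_]; rewrite subrr.
Qed.

Lemma not_SSP_cut_laplacian u1 u2 v1 v2 :
  u1 \notin P -> u2 \notin P -> v1 \notin P -> v2 \notin P ->
  ~~ connect (edgeD e P) u1 u2 -> ~~ connect (edgeD e P) v1 v2 ->
  {in [:: u1; u2] & [:: v1; v2], forall a b, ~~ connect (edgeD e P) a b} ->
  balanced e P u1 u2 -> balanced e P v1 v2 -> ~ SSP cut_laplacian.
Proof.
move=> u1P u2P v1P v2P u12 v12 uv balu balv.
pose dind a b := indicator (compD e P a) - indicator (compD e P b).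
have dindE a b k :
    dind a b k 0 = (connect (edgeD e P) a k)%:R - (connect (edgeD e P) b k)%:R.
  by rewrite !mxE !inE.
have dind_supp a b k : dind a b k 0 != 0 ->
    exists2 a', a' \in [:: a; b] & connect (edgeD e P) a' k.
  rewrite dindE; case: (boolP (connect _ a k)) => ak; first by exists a; rewrite ?inE ?eqxx.
  case: (boolP (connect _ b k)) => bk; first by exists b; rewrite ?inE ?eqxx ?orbT.
  by rewrite subrr eqxx.
have [At SG] := cut_laplacian_in_SG.
apply: (@not_SSP_of_null_vectors _ _ _ (dind u1 u2) (dind v1 v2) u1 v1 At).
- exact: cut_laplacian_null.
- exact: cut_laplacian_null.
- move=> k l kl; apply/eqP; rewrite mulf_eq0; apply/norP.
  case=> /dind_supp[a aU ak] /dind_supp[b bV bl]; apply: (negP (uv a b aU bV)).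
  have kP : k \notin P by apply: connect_edgeD_notin ak; move: aU; rewrite !inE => /orP[]/eqP->.
  have lP : l \notin P by apply: connect_edgeD_notin bl; move: bV; rewrite !inE => /orP[]/eqP->.
  have kl' : connect (edgeD e P) k l.
    have [<-|nkl] := eqVneq k l; first exact: connect0.
    by rewrite (negbTE nkl) SG //= in kl; apply: connect1; rewrite /edgeD /= kl kP lP.
  by rewrite (connect_edgeDC e_sym) in bl; apply: connect_trans ak (connect_trans kl' bl).
- by rewrite dindE connect0 (connect_edgeDC e_sym) (negbTE u12) subr0 oner_eq0.
- by rewrite dindE connect0 (connect_edgeDC e_sym) (negbTE v12) subr0 oner_eq0.
Qed.

End CutLaplacian.

Section NotGSSP.
Variables (R : realType) (n : nat) (e : rel 'I_n).
Hypotheses (e_sym : symmetric e) (e_irr : irreflexive e) (e_acy : graph_acyclic e).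

Lemma nbr_notin_set1 v u : e v u -> u \notin [set v].
Proof. by rewrite inE; apply: contraTneq => ->; rewrite e_irr. Qed.

Lemma not_connect_edgeD_nbrs v u u' : e v u -> e v u' -> u != u' ->
  ~~ connect (edgeD e [set v]) u u'.
Proof.
move=> evu evu'; apply: contra => /(connect_edgeD_nbrs e_sym e_acy _ evu evu').
by rewrite set11 nbr_notin_set1 // => /(_ isT isT) ->.
Qed.

Lemma deg4_not_GSSP v : (4 <= degree e v)%N -> ~ in_GSSP R e.
Proof.
case/card_geqP => s [+ + sub].
case: s sub => [|u1 [|u2 [|u3 [|u4 []]]]] //= sub + _.
rewrite !inE !negb_or => /and4P[/and3P[n12 n13 n14] /andP[n23 n24] n34 _].
have nbr_v u : u \in [:: u1; u2; u3; u4] -> e v u by move/sub; rewrite inE.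
have [e1 e2 e3 e4] : [/\ e v u1, e v u2, e v u3 & e v u4].
  by split; apply: nbr_v; rewrite !inE eqxx ?orbT.
have bal u u' : e v u -> e v u' -> balanced e [set v] u u'.
  by move=> evu evu' p; rewrite inE => /eqP ->; rewrite !nbr_count_nbr ?set11 ?nbr_notin_set1.
move=> GSSP; apply: (@not_SSP_cut_laplacian R _ _ e_sym e_irr [set v] u1 u2 u3 u4).
1-4: exact: nbr_notin_set1.
1-2: exact: not_connect_edgeD_nbrs.
- move=> a b; rewrite !inE => /orP[]/eqP-> /orP[]/eqP->;
  exact: not_connect_edgeD_nbrs.
1-2: exact: bal.
by apply: GSSP; apply: cut_laplacian_in_SG.
Qed.

Lemma two_nbrs_away (a b : 'I_n) : (3 <= degree e a)%N ->
  exists a1 a2, [/\ a1 != a2, e a a1, e a a2,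
    ~~ connect (edgeD e [set a]) a1 b & ~~ connect (edgeD e [set a]) a2 b].
Proof.
case/card_geqP => s [+ + sub].
case: s sub => [|u1 [|u2 [|u3 []]]] //= sub + _.
rewrite !inE !negb_or => /and3P[/andP[n12 n13] n23 _].
have nbr_a u : u \in [:: u1; u2; u3] -> e a u by move/sub; rewrite inE.
have [e1 e2 e3] : [/\ e a u1, e a u2 & e a u3].
  by split; apply: nbr_a; rewrite !inE eqxx ?orbT.
have one u u' : e a u -> e a u' -> u != u' ->
    connect (edgeD e [set a]) u b -> ~~ connect (edgeD e [set a]) u' b.
  move=> eu eu' uu' ub; apply: contra uu' => u'b.
  apply/eqP/(connect_edgeD_nbrs e_sym e_acy (set11 a) eu eu' (nbr_notin_set1 eu)).
  by apply: connect_trans ub _; rewrite (connect_edgeDC e_sym).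
have [b1|b1] := boolP (connect (edgeD e [set a]) u1 b).
  by exists u2, u3; split; rewrite ?(one u1) // eq_sym.
have [b2|b2] := boolP (connect (edgeD e [set a]) u2 b).
  by exists u1, u3; split; rewrite ?(one u2) // eq_sym.
by exists u1, u2.
Qed.

Section AwayFrom.
Variables a b x : 'I_n.
Hypotheses (ab : a != b) (eax : e a x) (xb : ~~ connect (edgeD e [set a]) x b).

Lemma away_notin : x \notin [set a; b].
Proof.
rewrite !inE negb_or; apply/andP; split.
  by apply: contraTneq eax => ->; rewrite e_irr.
by apply: contraNneq xb => ->; rewrite connect0.
Qed.

Lemma away_connect_edgeD y : e b y -> y \notin [set a; b] ->
  ~~ connect (edgeD e [set a; b]) x y.
Proof.
move=> eby yP; apply: contra xb => /(connect_edgeD_subset (subsetUl _ _)) xy.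
apply: connect_trans xy (connect1 _).
by move: yP; rewrite /edgeD /= e_sym eby !inE negb_or (eq_sym b) ab => /andP[-> _].
Qed.

Lemma away_nbr_count : nbr_count e [set a; b] x b = 0%N.
Proof.
apply: eq_card0 => y; rewrite !inE; apply/negP => /andP[xy eby].
have yP : y \notin [set a; b] by apply: connect_edgeD_notin away_notin xy.
by rewrite (negbTE (away_connect_edgeD eby yP)) in xy.
Qed.

End AwayFrom.

Lemma two_deg3_not_GSSP a b : a != b -> degree e a = 3%N -> degree e b = 3%N ->
  ~ in_GSSP R e.
Proof.
move=> ab da db.
have [a1 [a2 [a12 ea1 ea2 a1b a2b]]] := two_nbrs_away b (eq_leq (esym da)).
have [b1 [b2 [b12 eb1 eb2 b1a b2a]]] := two_nbrs_away a (eq_leq (esym db)).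
have ba : b != a by rewrite eq_sym.
have Pba : [set b; a] = [set a; b] by rewrite setUC.
have [Pa1 Pa2] := (away_notin ea1 a1b, away_notin ea2 a2b).
have [Pb1 Pb2] := (away_notin eb1 b1a, away_notin eb2 b2a).
rewrite Pba in Pb1 Pb2.
have sep12 v v1 v2 : e v v1 -> e v v2 -> v1 != v2 -> v \in [set a; b] ->
    ~~ connect (edgeD e [set a; b]) v1 v2.
  move=> ev1 ev2 v12; rewrite -sub1set => vP; apply: contra v12.
  move=> /(connect_edgeD_subset vP).
  by move/(connect_edgeD_nbrs e_sym e_acy (set11 v) ev1 ev2 (nbr_notin_set1 ev1)) ->.
move=> GSSP; apply: (@not_SSP_cut_laplacian R _ _ e_sym e_irr [set a; b] a1 a2 b1 b2) => //.
- by apply: (sep12 a); rewrite ?set21.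
- by apply: (sep12 b); rewrite ?set22.
- by move=> u v; rewrite !inE => /orP[]/eqP-> /orP[]/eqP->; apply: away_connect_edgeD.
- move=> p; rewrite !inE => /orP[]/eqP->.
    by rewrite !nbr_count_nbr ?set21.
  by rewrite !away_nbr_count.
- move=> p; rewrite !inE => /orP[]/eqP->.
    by rewrite -Pba !away_nbr_count.
  by rewrite !nbr_count_nbr ?set22.
- by apply: GSSP; apply: cut_laplacian_in_SG.
Qed.

End NotGSSP.

Local Close Scope ring_scope.

Section RootedTree.
Variables (n : nat) (e : rel 'I_n).
Hypotheses (e_sym : symmetric e) (e_irr : irreflexive e).
Hypotheses (e_acy : graph_acyclic e) (e_conn : graph_connected e).
Variable c : 'I_n.

Fixpoint ball k : {set 'I_n} :=
  if k is k'.+1 then ball k' :|: [set y | [exists x in ball k', e x y]] else [set c].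

Lemma ball_path s x k : x \in ball k -> path e x s -> last x s \in ball (k + size s).
Proof.
elim: s x k => [|y s IH] x k /=; first by rewrite addn0.
move=> xk /andP[exy ps]; rewrite addnS -addSn; apply: IH ps.
by rewrite /= !inE; apply/orP; right; apply/existsP; exists x; rewrite xk.
Qed.

Lemma ball_exists v : exists k, v \in ball k.
Proof.
have /connectP [s ps ->] := e_conn c v.
by exists (0 + size s)%N; apply: ball_path ps; rewrite /= inE.
Qed.

Definition depth v := ex_minn (ball_exists v).

Lemma depth_ball v : v \in ball (depth v).
Proof. by rewrite /depth; case: ex_minnP. Qed.

Lemma depth_min v k : v \in ball k -> (depth v <= k)%N.
Proof. by rewrite /depth; case: ex_minnP => m _ H /H. Qed.

Lemma depth_root : depth c = 0%N.
Proof. by apply/eqP; rewrite -leqn0; apply: depth_min; rewrite /= inE. Qed.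

Lemma depth_eq0 v : depth v = 0%N -> v = c.
Proof. by move=> hv; have := depth_ball v; rewrite hv /= inE => /eqP. Qed.

Lemma depth_gt0 v : v != c -> (0 < depth v)%N.
Proof. by move=> vc; rewrite lt0n; apply: contra vc => /eqP/depth_eq0 ->. Qed.

Lemma depth_edge x y : e x y -> (depth y <= (depth x).+1)%N.
Proof.
move=> exy; apply: depth_min => /=; rewrite !inE; apply/orP; right.
by apply/existsP; exists x; rewrite depth_ball.
Qed.

Lemma parent_exists v : v != c -> exists x, e x v && ((depth x).+1 == depth v).
Proof.
move=> vc; have := depth_ball v; have := depth_gt0 vc.
case E: (depth v) => [|k] // _ /=; rewrite !inE => /orP[vk|].
  by have := depth_min vk; rewrite E ltnn.
case/existsP => x /andP[xk exv]; exists x; rewrite exv /=.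
by have := depth_min xk; have := depth_edge exv; rewrite E => ? ?; apply/eqP; lia.
Qed.

Definition parent v := odflt v [pick x | e x v && ((depth x).+1 == depth v)].

Lemma parent_spec v : v != c -> e (parent v) v /\ (depth (parent v)).+1 = depth v.
Proof.
move=> vc; rewrite /parent; case: pickP => [x /andP[exv /eqP hx]|none] //=.
by have [x] := parent_exists vc; rewrite none.
Qed.

Lemma edge_parent v : v != c -> e v (parent v).
Proof. by move=> vc; rewrite e_sym; case: (parent_spec vc). Qed.

Lemma depth_parent v : v != c -> depth (parent v) = (depth v).-1.
Proof. by move=> vc; case: (parent_spec vc) => _ <-. Qed.

Lemma connect_root_avoid p v : p != c -> (depth v <= depth p)%N -> v != p ->
  connect (edgeD e [set p]) v c.
Proof.
move=> pc; elim/ltn_ind: (depth v) {-2}v (erefl (depth v)) => k IH {}v hv hvp vp.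
have [->|vc] := eqVneq v c; first exact: connect0.
have [epv hpv] := parent_spec vc.
have pvp : parent v != p by apply/eqP => E; rewrite E in hpv; lia.
apply: connect_trans (connect1 _) (IH _ _ (parent v) erefl _ pvp); try lia.
by rewrite /edgeD /= e_sym epv !inE vp pvp.
Qed.

(* Otherwise [parent y] and [x] are two neighbours of [y] joined through the
   root by a walk avoiding [y]. *)
Lemma edge_parent_le x y : e x y -> (depth x <= depth y)%N -> y != c /\ x = parent y.
Proof.
move=> exy hxy.
have yc : y != c.
  apply/eqP => yc; move: hxy; rewrite yc depth_root leqn0 => /eqP/depth_eq0 xc.
  by move: exy; rewrite xc yc e_irr.
split=> //; apply/eqP/negPn/negP => xpy.
have [epy hpy] := parent_spec yc.
have pyy : parent y \notin [set y] by rewrite inE; apply/eqP => E; rewrite E in hpy; lia.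
have eyx : e y x by rewrite e_sym.
suff /(connect_edgeD_nbrs e_sym e_acy (set11 y) (edge_parent yc) eyx pyy) pyx :
    connect (edgeD e [set y]) (parent y) x by rewrite pyx eqxx in xpy.
apply: connect_trans (connect_root_avoid yc _ _) _; first lia.
  by apply: contraNneq pyy => ->; rewrite inE.
rewrite (connect_edgeDC e_sym); apply: connect_root_avoid => //.
by apply: contraTneq exy => ->; rewrite e_irr.
Qed.

Lemma edge_parent_cases x y : e x y ->
  (y != c /\ x = parent y) \/ (x != c /\ y = parent x).
Proof.
move=> exy; case: (leqP (depth x) (depth y)) => hxy; first by left; apply: edge_parent_le.
by right; apply: edge_parent_le; [rewrite e_sym | apply: ltnW].
Qed.

Definition ancestor k v := iter k parent v.

Lemma ancestorSr k v : ancestor k (parent v) = ancestor k.+1 v.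
Proof. by rewrite /ancestor iterSr. Qed.

Lemma depth_ancestor k v : (k <= depth v)%N -> depth (ancestor k v) = (depth v - k)%N.
Proof.
elim: k => [|k IH] hk; first by rewrite subn0.
have ac : ancestor k v != c.
  by apply/eqP => E; have := IH (ltnW hk); rewrite E depth_root; lia.
by rewrite /ancestor iterS depth_parent // IH; [lia | exact: ltnW].
Qed.

Lemma ancestor_neq_root k v : (k < depth v)%N -> ancestor k v != c.
Proof.
by move=> hk; apply/eqP => E; have := depth_ancestor (ltnW hk); rewrite E depth_root; lia.
Qed.

Lemma ancestor_depth v : ancestor (depth v) v = c.
Proof. by apply: depth_eq0; rewrite depth_ancestor // subnn. Qed.

Lemma depth_lt v : (depth v < n)%N.
Proof.
have inj : injective (fun k : 'I_(depth v).+1 => ancestor k v).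
  move=> k1 k2 /(congr1 depth); have := ltn_ord k1; have := ltn_ord k2.
  by rewrite !ltnS => l1 l2; rewrite !depth_ancestor // => E; apply/val_inj => /=; lia.
by have := leq_card _ inj; rewrite !card_ord.
Qed.

Definition leg v := ancestor (depth v).-1 v.

Lemma depth_leg v : v != c -> depth (leg v) = 1%N.
Proof. by move=> vc; have := depth_gt0 vc; rewrite /leg depth_ancestor; lia. Qed.

Lemma leg_neq_root v : v != c -> leg v != c.
Proof. by move=> vc; apply/eqP => E; have := depth_leg vc; rewrite E depth_root. Qed.

Lemma parent_leg v : v != c -> parent (leg v) = c.
Proof. by move=> vc; apply: depth_eq0; rewrite depth_parent ?leg_neq_root // depth_leg. Qed.

Lemma leg_ancestor k v : (k < depth v)%N -> leg (ancestor k v) = leg v.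
Proof.
by move=> hk; rewrite /leg depth_ancestor ?(ltnW hk) // /ancestor -iterD; congr iter; lia.
Qed.

Lemma leg_parent v : (2 <= depth v)%N -> leg (parent v) = leg v.
Proof. by move=> hv; rewrite -[parent v]/(ancestor 1 v) leg_ancestor. Qed.

Lemma leg_depth1 v : depth v = 1%N -> leg v = v.
Proof. by move=> hv; rewrite /leg hv. Qed.

Lemma root_nbr r : e c r -> [/\ r != c, parent r = c, depth r = 1%N & leg r = r].
Proof.
move=> ecr; have [[rc pr]|[]] := edge_parent_cases ecr; last by rewrite eqxx.
have hr : depth r = 1%N.
  by have := depth_parent rc; have := depth_gt0 rc; rewrite -pr depth_root; lia.
by rewrite leg_depth1 // -pr.
Qed.

Hypothesis deg_le2 : forall v, v != c -> (degree e v <= 2)%N.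
Hypothesis deg_root : (degree e c <= 3)%N.

Lemma root_nbr_mem r s t k :
  e c r -> e c s -> e c t -> e c k -> uniq [:: r; s; t] -> k \in [:: r; s; t].
Proof.
move=> ecr ecs ect eck rst; apply/negPn/negP => kN.
have := deg_root; rewrite leqNgt => /negP; apply; apply/card_geqP.
exists [:: k; r; s; t]; split=> //; first by rewrite /= kN.
by move=> x; rewrite !inE => /or4P[] /eqP ->.
Qed.

Lemma parent_inj k1 k2 : k1 != c -> k2 != c -> parent k1 != c ->
  parent k1 = parent k2 -> k1 = k2.
Proof.
move=> k1c k2c vc p12; apply/eqP/negPn/negP => k12.
have := deg_le2 vc; rewrite leqNgt => /negP; apply; apply/card_gt2P.
have h1 := depth_parent k1c; have h2 := depth_parent k2c; have hv := depth_parent vc.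
rewrite -p12 in h2; have := depth_gt0 vc.
exists (parent (parent k1)), k1, k2; split; split; rewrite ?inE ?edge_parent //.
- by case: (parent_spec k1c).
- by rewrite p12; case: (parent_spec k2c).
- by apply/eqP => E; rewrite E in hv; lia.
- by apply/eqP => E; rewrite E in h2; lia.
Qed.

Lemma leg_inj x y : x != c -> y != c -> leg x = leg y -> depth x = depth y -> x = y.
Proof.
elim: (depth x) {-2}x y (erefl (depth x)) => [|m IH] {}x y hx xc yc lxy hxy.
  by have := depth_gt0 xc; rewrite hx.
case: m IH hx => [|m] IH hx; first by rewrite -(leg_depth1 hx) lxy leg_depth1 // -hxy.
have px : parent x != c by apply/eqP => E; have := depth_parent xc; rewrite E depth_root hx.
have py : parent y != c.
  by apply/eqP => E; have := depth_parent yc; rewrite E depth_root -hxy hx.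
have hy : depth y = m.+2 by rewrite -hxy.
apply: parent_inj => //; apply: IH => //.
- by rewrite depth_parent // hx.
- by rewrite !leg_parent ?hx ?hy.
- by rewrite !depth_parent // hxy.
Qed.

Lemma same_leg x y : x != c -> y != c -> leg x = leg y -> (depth x <= depth y)%N ->
  x = ancestor (depth y - depth x) y.
Proof.
move=> xc yc lxy hxy; have := depth_gt0 xc => hx.
apply: leg_inj => //; first (by apply: ancestor_neq_root; lia).
  by rewrite leg_ancestor //; lia.
by rewrite depth_ancestor; lia.
Qed.

Lemma deeper_leg_child y z : y != c -> z != c -> leg z = leg y ->
  (depth y < depth z)%N -> exists2 k, k != c & parent k = y.
Proof.
move=> yc zc lzy hyz; exists (ancestor (depth z - depth y).-1 z).
  by apply: ancestor_neq_root; lia.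
rewrite -[parent _]/(ancestor (depth z - depth y).-1.+1 z) prednK ?subn_gt0 //.
by rewrite -same_leg // ltnW.
Qed.

Lemma edge_root_leg v : v != c -> e c (leg v).
Proof. by move=> vc; rewrite e_sym -(parent_leg vc) edge_parent ?leg_neq_root. Qed.

Local Open Scope ring_scope.

Section CommutingMatrix.
Variables (R : realType) (A X : 'M[R]_n).
Hypotheses (A_SG : in_SG e A) (X_tr : X^T = X).
Hypotheses (AX0 : hadamard A X = 0) (IX0 : hadamard 1%:M X = 0).
Hypothesis AX_comm : A *m X - X *m A = 0.

Lemma A_sym i j : A i j = A j i.
Proof. by case: A_SG => /matrixP /(_ j i); rewrite mxE. Qed.

Lemma A_nonedge i j : i != j -> ~~ e i j -> A i j = 0.
Proof. by case: A_SG => _ H ij; rewrite -(H _ _ ij) => /negPn/eqP. Qed.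

Lemma A_edge_neq0 i j : e i j -> A i j != 0.
Proof. by move=> eij; case: A_SG => _ ->//; apply: contraTneq eij => ->; rewrite e_irr. Qed.

Lemma X_sym i j : X i j = X j i.
Proof. by move/matrixP: X_tr => /(_ j i); rewrite mxE. Qed.

Lemma X_diag i : X i i = 0.
Proof. by move/matrixP: IX0 => /(_ i i); rewrite !mxE eqxx mul1r. Qed.

Lemma X_edge i j : e i j -> X i j = 0.
Proof.
move=> eij; move/matrixP: AX0 => /(_ i j); rewrite !mxE => /eqP.
by rewrite mulf_eq0 (negbTE (A_edge_neq0 eij)) => /eqP.
Qed.

Lemma commE u w : \sum_k A u k * X k w = \sum_k X u k * A k w.
Proof.
by move/matrixP: AX_comm => /(_ u w); rewrite !mxE => /eqP; rewrite subr_eq0 => /eqP.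
Qed.

(* Entry [(ancestor D.+1 j, j)] of [A X = X A]: on the left only the term
   through [ancestor D.+2 j] survives, on the right none does. *)
Lemma X_ancestor_step D j :
    (forall D' j', (D' < D.+2)%N -> (D' <= depth j')%N -> X (ancestor D' j') j' = 0) ->
    (forall k, k != c -> parent k = j -> X (ancestor D.+2 k) k = 0) ->
  (D.+2 <= depth j)%N -> X (ancestor D.+2 j) j = 0.
Proof.
move=> IH IHch hj.
set i := ancestor D.+2 j; set u := ancestor D.+1 j; set w := ancestor D j.
have pu : parent u = i by rewrite /i /ancestor iterS.
have pw : parent w = u by rewrite /u /ancestor iterS.
have uc : u != c by apply: ancestor_neq_root; lia.
have wc : w != c by apply: ancestor_neq_root; lia.
have Xuj : X u j = 0 by apply: IH; lia.
have := commE u j; rewrite (big_only1 i) //; last first.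
  move=> k ki _; have [->|ku] := eqVneq k u; first by rewrite Xuj mulr0.
  have [euk|neuk] := boolP (e u k); last by rewrite A_nonedge ?mul0r // eq_sym.
  case: (edge_parent_cases euk) => [[kc uk]|[_ kpu]]; last by rewrite -pu kpu eqxx in ki.
  have -> : k = w by apply: parent_inj; rewrite // -?uk ?pw.
  by rewrite IH ?mulr0 //; lia.
rewrite big1 => [/eqP|k _]; last first.
  have [->|kj] := eqVneq k j; first by rewrite Xuj mul0r.
  have [ekj|nekj] := boolP (e k j); last by rewrite A_nonedge ?mulr0.
  case: (edge_parent_cases ekj) => [[jc ->]|[kc jpk]].
    by rewrite /u -ancestorSr IH ?mul0r // depth_parent //; lia.
  have -> : u = ancestor D.+2 k by rewrite /u jpk ancestorSr.
  by rewrite IHch ?mul0r // jpk.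
by rewrite mulf_eq0 (negbTE (A_edge_neq0 _)) -?pu ?edge_parent // => /eqP.
Qed.

Lemma X_ancestor D j : (D <= depth j)%N -> X (ancestor D j) j = 0.
Proof.
elim/ltn_ind: D j => -[|[|D]] IH j hj; first exact: X_diag.
  have jc : j != c by apply: contraTneq hj => ->; rewrite depth_root.
  by apply: X_edge; rewrite /ancestor /= e_sym edge_parent.
have [t] := ubnP (n - depth j); elim: t j hj => // t IHt j hj ht.
apply: (X_ancestor_step (j := j)) => // [D' j' /IH|k kc pk]; first exact.
have [_ hk] := parent_spec kc; rewrite pk in hk.
by apply: IHt; have := depth_lt k; lia.
Qed.

(* Product of the entries of [A] along the path from [v] up to its leg root;
   rescaling [X] by these weights makes the transport along legs exact. *)
Definition leg_weight v := \prod_(k < (depth v).-1) A (ancestor k v) (ancestor k.+1 v).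

Lemma leg_weight1 v : (depth v <= 1)%N -> leg_weight v = 1.
Proof. by move=> hv; rewrite /leg_weight (_ : (depth v).-1 = 0%N) ?big_ord0 //; lia. Qed.

Lemma leg_weight_parent v : (2 <= depth v)%N ->
  leg_weight v = A v (parent v) * leg_weight (parent v).
Proof.
move=> hv; have vc : v != c by apply: contraTneq hv => ->; rewrite depth_root.
rewrite /leg_weight (_ : (depth v).-1 = (depth (parent v)).-1.+1); last first.
  by rewrite depth_parent //; lia.
by rewrite big_ord_recl; congr (_ * _); apply: eq_bigr => i _; rewrite !ancestorSr.
Qed.

Lemma leg_weight_neq0 v : leg_weight v != 0.
Proof.
elim/ltn_ind: (depth v) {-2}v (erefl (depth v)) => k IH {}v hv.
have [hv1|hv1] := leqP (depth v) 1; first by rewrite leg_weight1 ?oner_eq0.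
have vc : v != c by apply: contraTneq hv1 => ->; rewrite depth_root.
rewrite leg_weight_parent // mulf_neq0 ?A_edge_neq0 ?edge_parent //.
by apply: (IH (depth (parent v))); rewrite // depth_parent //; lia.
Qed.

Lemma X_root j : X c j = 0.
Proof. by rewrite -(ancestor_depth j); apply: X_ancestor. Qed.

Lemma X_root' j : X j c = 0.
Proof. by rewrite X_sym X_root. Qed.

Definition cross_pair D x y : Prop :=
  [/\ x != c, y != c, leg x != leg y & (depth x + depth y)%N = D].

Definition weighted_X x y := X x y * leg_weight x * leg_weight y.

(* The weighted entry of [X] between [r] and the vertex of leg [s] at depth
   [D.-1], if any (there is at most one). *)
Definition leg_entry D r s :=
  \sum_(y | (leg y == s) && (depth y == D.-1)%N) X r y * leg_weight y.

Lemma leg_entry_root D s : leg_entry D c s = 0.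
Proof. by rewrite /leg_entry big1 // => y _; rewrite X_root mul0r. Qed.

Section CrossInduction.
Variable D : nat.
Hypothesis X_cross_lt : forall D', (D' < D)%N -> forall x y, cross_pair D' x y -> X x y = 0.

(* Row [parent x] of [A X = X A] at column [y] moves the pair one step up
   the leg of [x] and one step down the leg of [y]. *)
Lemma weighted_X_shift x y : cross_pair D x y -> (2 <= depth x)%N ->
  weighted_X x y = \sum_(k | (parent k == y) && (k != c)) weighted_X (parent x) k.
Proof.
case=> xc yc lxy hD hx; set u := parent x.
have hu : depth u = (depth x).-1 by rewrite depth_parent.
have uc : u != c by apply/eqP => E; move: hu; rewrite E depth_root; lia.
have lu : leg u = leg x by rewrite leg_parent.
have hy := depth_gt0 yc.
have Xuy : X u y = 0.
  by apply: (X_cross_lt (D' := (depth u + depth y)%N)); [lia | split; rewrite ?lu].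
have := commE u y; rewrite (big_only1 x) //; last first.
  move=> k kx _; have [->|ku] := eqVneq k u; first by rewrite Xuy mulr0.
  have [euk|neuk] := boolP (e u k); last by rewrite A_nonedge ?mul0r // eq_sym.
  case: (edge_parent_cases euk) => [[kc uk]|[_ ->]].
    by have := parent_inj kc xc; rewrite -uk => /(_ uc erefl) kx'; rewrite kx' eqxx in kx.
  have [->|puc] := eqVneq (parent u) c; first by rewrite X_root mulr0.
  have hu2 : (2 <= depth u)%N by have := depth_gt0 puc; rewrite depth_parent //; lia.
  rewrite (X_cross_lt (D' := (depth (parent u) + depth y)%N)) ?mulr0 //.
    by rewrite depth_parent //; lia.
  by split; rewrite ?leg_parent ?lu.
rewrite (bigID (fun k => (parent k == y) && (k != c))) /= [X in _ + X]big1 ?addr0.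
  move=> E; rewrite /weighted_X leg_weight_parent // -/u.
  rewrite (_ : X x y * _ * _ = (A u x * X x y) * (leg_weight u * leg_weight y)).
    rewrite E big_distrl /=; apply: eq_bigr => k /andP[/eqP pk kc].
    rewrite (leg_weight_parent (v := k)) ?pk; first by ring.
    by have := depth_parent kc; have := depth_gt0 kc; rewrite pk; lia.
  by rewrite (A_sym x); ring.
move=> k kP; have [->|ky] := eqVneq k y; first by rewrite Xuy mul0r.
have [eky|neky] := boolP (e k y); last by rewrite A_nonedge ?mulr0.
case: (edge_parent_cases eky) => [[_ ->]|[kc ykp]]; last by rewrite ykp eqxx kc in kP.
have [->|pyc] := eqVneq (parent y) c; first by rewrite X_root' mul0r.
have hy2 : (2 <= depth y)%N by have := depth_gt0 pyc; rewrite depth_parent //; lia.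
rewrite (X_cross_lt (D' := (depth u + depth (parent y))%N)) ?mul0r //.
  by rewrite depth_parent //; lia.
by split; rewrite ?leg_parent ?lu.
Qed.

Lemma weighted_X_leg x y : cross_pair D x y ->
  weighted_X x y = leg_entry D (leg x) (leg y).
Proof.
move=> cxy; have [p hx] : exists p, depth x = p.+1.
  by case: cxy => xc _ _ _; exists (depth x).-1; rewrite prednK // depth_gt0.
elim: p x y hx cxy => [|p IHp] x y hx [xc yc lxy hD]; have hy := depth_gt0 yc.
  rewrite /weighted_X leg_weight1 ?hx // mulr1 leg_depth1 // /leg_entry.
  rewrite (big_only1 y) ?eqxx //=; first by apply/eqP; lia.
  move=> k ky /andP[/eqP lk /eqP hk]; exfalso; move/eqP: ky; apply.
  have kc : k != c by apply/eqP => E; move: hk; rewrite E depth_root; lia.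
  by apply: leg_inj => //; lia.
have xs : (2 <= depth x)%N by rewrite hx.
have cxy : cross_pair D x y by [].
rewrite weighted_X_shift //.
have pxc : parent x != c by apply/eqP => E; have := depth_parent xc; rewrite E depth_root hx.
have hpx : depth (parent x) = p.+1 by rewrite depth_parent // hx.
have [k0 /andP[/eqP pk0 k0c]|nochild] :=
  pickP (fun k => (parent k == y) && (k != c)); last first.
  rewrite big1 => [|k]; last by rewrite nochild.
  rewrite /leg_entry big1 // => z /andP[/eqP lz /eqP hz].
  have zc : z != c by apply/eqP => E; move: hz; rewrite E depth_root; lia.
  have [|k kc pk] := deeper_leg_child yc zc lz; first lia.
  by have := nochild k; rewrite pk eqxx kc.
rewrite (big_only1 k0) ?pk0 ?eqxx ?k0c //; last first.
  move=> k kk0 /andP[/eqP pk kc]; exfalso; move/eqP: kk0; apply.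
  by apply: parent_inj; rewrite ?pk ?pk0.
have hk0 : depth k0 = (depth y).+1 by have [_ <-] := parent_spec k0c; rewrite pk0.
have lk0 : leg k0 = leg y by rewrite -pk0 leg_parent // hk0.
have lpx : leg (parent x) = leg x by rewrite leg_parent.
rewrite IHp ?lpx ?lk0 //; split=> //; first by rewrite lpx lk0.
by rewrite hpx hk0; lia.
Qed.

Hypothesis D_ge2 : (2 <= D)%N.

Lemma leg_entry_sym r s : e c r -> e c s -> r != s -> leg_entry D r s = leg_entry D s r.
Proof.
have transpose r' s' y : e c r' -> e c s' -> r' != s' -> leg y = s' -> depth y = D.-1 ->
    leg_entry D r' s' = leg_entry D s' r'.
  move=> ecr ecs rs ly hy.
  have [rc _ hr lr] := root_nbr ecr.
  have yc : y != c by apply/eqP => E; move: hy; rewrite E depth_root; lia.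
  have ry : cross_pair D r' y by split=> //; [rewrite lr ly | rewrite hr hy; lia].
  have yr : cross_pair D y r' by split=> //; [rewrite lr ly eq_sym | rewrite hr hy; lia].
  rewrite -lr -ly -(weighted_X_leg ry) -(weighted_X_leg yr) /weighted_X X_sym; ring.
move=> ecr ecs rs.
have [y /andP[/eqP ly /eqP hy]|nos] := pickP (fun y => (leg y == s) && (depth y == D.-1)%N).
  exact: (transpose r s y).
have [y /andP[/eqP ly /eqP hy]|nor] := pickP (fun y => (leg y == r) && (depth y == D.-1)%N).
  by apply/esym/(transpose s r y); rewrite // eq_sym.
by rewrite /leg_entry !big1 // => y; rewrite ?nos ?nor.
Qed.

(* Row [c] of [A X = X A] at a column [y] of leg [s]: [X c _] vanishes and so
   does [X s y], [s] being an ancestor of [y]. *)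
Lemma sum_leg_entry s : e c s -> \sum_(k | k != s) A c k * leg_entry D k s = 0.
Proof.
move=> ecs; rewrite /leg_entry; under eq_bigr do rewrite big_distrr /=.
rewrite exchange_big /= big1 // => y /andP[/eqP ly /eqP hy].
have := commE c y; rewrite [RHS]big1 => [|k _]; last by rewrite X_root mul0r.
have Xsy : X s y = 0 by rewrite -ly; apply: X_ancestor; rewrite leq_pred.
rewrite (bigD1 s) //= Xsy mulr0 add0r => E.
transitivity ((\sum_(k | k != s) A c k * X k y) * leg_weight y); last by rewrite E mul0r.
by rewrite big_distrl; apply: eq_bigr => k _; rewrite mulrA.
Qed.

Lemma leg_entry_eq0 r s : e c r -> e c s -> r != s -> leg_entry D r s = 0.
Proof.
move=> ecr ecs rs.
have off k s' : ~~ e c k -> A c k * leg_entry D k s' = 0.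
  have [->|kc nek] := eqVneq k c; first by rewrite leg_entry_root mulr0.
  by rewrite A_nonedge ?mul0r // eq_sym.
have [t /and3P[ect tr ts]|] := pickP (fun t => [&& e c t, t != r & t != s]); last first.
  move=> two; have := sum_leg_entry ecs; rewrite (big_only1 r) //.
    by move/eqP; rewrite mulf_eq0 (negbTE (A_edge_neq0 ecr)) => /eqP.
  by move=> k kr ks; apply: off; apply/negP => eck; have := two k; rewrite eck kr ks.
have rst : uniq [:: r; s; t] by rewrite /= !inE negb_or rs !(eq_sym _ t) tr ts.
have off3 k s' : k != r -> k != s -> k != t -> A c k * leg_entry D k s' = 0.
  move=> kr ks kt; apply: off; apply/negP => /(root_nbr_mem ecr ecs ect) /(_ rst).
  by rewrite !inE (negbTE kr) (negbTE ks) (negbTE kt).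
have sum2 s' a b : e c s' -> a != b -> a != s' -> b != s' ->
    (forall k, k != a -> k != b -> k != s' -> A c k * leg_entry D k s' = 0) ->
    A c a * leg_entry D a s' + A c b * leg_entry D b s' = 0.
  move=> ecs' ab as' bs' H; rewrite -(big_only2 (P := fun k => k != s') ab as' bs' H).
  exact: sum_leg_entry.
have [rt st sr] : [/\ r != t, s != t & s != r] by rewrite !(eq_sym _ t) (eq_sym s).
have Es := sum2 s r t ecs rt rs ts (fun k kr kt ks => off3 k s kr ks kt).
have Er := sum2 r s t ecr st sr tr (fun k ks kt kr => off3 k r kr ks kt).
have Et := sum2 t r s ect rs rt st (fun k kr ks kt => off3 k t kr ks kt).
rewrite (leg_entry_sym ect ecs ts) in Es.
rewrite (leg_entry_sym ecs ecr) 1?eq_sym // (leg_entry_sym ect ecr tr) in Er.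
exact: (triangle_system_eq0 (A_edge_neq0 ecr) (A_edge_neq0 ecs) Es Er Et).
Qed.

End CrossInduction.

Lemma X_cross D x y : cross_pair D x y -> X x y = 0.
Proof.
elim/ltn_ind: D x y => D IH x y cxy; have [xc yc lxy hD] := cxy.
have D2 : (2 <= D)%N by have := depth_gt0 xc; have := depth_gt0 yc; lia.
move: (weighted_X_leg IH cxy); rewrite leg_entry_eq0 ?edge_root_leg //.
by move/eqP; rewrite /weighted_X !mulf_eq0 !(negbTE (leg_weight_neq0 _)) !orbF => /eqP.
Qed.

Lemma X_eq0 : X = 0.
Proof.
apply/matrixP => i j; rewrite mxE.
have [->|ic] := eqVneq i c; first exact: X_root.
have [->|jc] := eqVneq j c; first exact: X_root'.
have [lij|lij] := eqVneq (leg i) (leg j); last first.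
  by apply: (X_cross (D := (depth i + depth j)%N)).
have [hij|/ltnW hji] := leqP (depth i) (depth j).
  by rewrite (same_leg ic jc lij hij) X_ancestor ?leq_subr.
by rewrite X_sym (same_leg jc ic (esym lij) hji) X_ancestor ?leq_subr.
Qed.

End CommutingMatrix.

Lemma spider_in_GSSP (R : realType) : in_GSSP R e.
Proof. by move=> A A_SG X; apply: X_eq0 A_SG. Qed.

End RootedTree.

Lemma spider_center (n : nat) (e : rel 'I_n) (v0 : 'I_n) :
  (forall v, (degree e v < 4)%N) ->
  ~ (exists u v, u != v /\ degree e u = 3%N /\ degree e v = 3%N) ->
  exists c, forall v, v != c -> (degree e v <= 2)%N.
Proof.
move=> deg_lt4 no_two3.
have [c /eqP dc|none] := pickP (fun v => degree e v == 3%N); [exists c | exists v0];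
  move=> v vc; have := deg_lt4 v; rewrite ltnS leq_eqVlt => /orP[/eqP dv|//].
  by case: no_two3; exists v, c.
by have := none v; rewrite dv eqxx.
Qed.

Theorem theorem4p3 (R : realType) (n : nat) (e : rel 'I_n) :
  is_tree e ->
  (in_GSSP R e <->
   ((forall v : 'I_n, (degree e v < 4)%N) /\
    ~ (exists u v : 'I_n, u != v /\ degree e u = 3%N /\ degree e v = 3%N))).
Proof.
move=> [[e_sym e_irr] [e_conn e_acy]]; split.
  move=> GSSP; split=> [v|[u [v [uv [du dv]]]]].
    by rewrite ltnNge; apply/negP => d4; apply: (deg4_not_GSSP e_sym e_irr e_acy d4 GSSP).
  exact: (two_deg3_not_GSSP e_sym e_irr e_acy uv du dv GSSP).
case=> deg_lt4 no_two3 A A_SG.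
have [v0 _|no_vertex] := pickP (fun _ : 'I_n => true); last first.
  by move=> X *; apply/matrixP => i; have := no_vertex i.
have [c deg_le2] := spider_center v0 deg_lt4 no_two3.
apply: (spider_in_GSSP e_sym e_irr e_acy e_conn deg_le2) A_SG.
by rewrite -ltnS.
Qed.
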